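(* Let $G$ be a finite, simple, undirected, connected graph that is $C_4$-free, has order $n$, diameter $d$, and edge-connectivity $\lambda\geq 4$. Then $$d\leq \frac{n-3}{3}.$$
   Context: A graph is $C_4$-free if it contains no cycle of length four as a (not necessarily induced) subgraph. The edge-connectivity of a connected graph is the minimum number of edges whose removal disconnects it. *)

(* A finite simple undirected graph is a symmetric,
   irreflexive relation e on a finType T (vertices = T). *)
From mathcomp Require Import all_boot all_order all_algebra.
Set Implicit Arguments. Unset Strict Implicit. Unset Printing Implicit Defensive.

Section Graphs.
Variable T : finType.

Definition gconnected (e : rel T) : bool :=
  (0 < #|T|) && [forall x, [forall y, connect e x y]].

Definition edgeset (e : rel T) : {set {set T}} :=
  [set [set x; y] | x in T, y in T & e x y].

Definition remove_edges (e : rel T) (F : {set {set T}}) : rel T :=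
  fun x y => e x y && ([set x; y] \notin F).

(* edge-connectivity: minimum number of edges whose removal disconnects
   the graph (0 for graphs with at most one vertex) *)
Definition edge_connectivity (e : rel T) : nat :=
  if #|T| <= 1 then 0 else
  \big[minn/#|T|]_(F : {set {set T}} |
        (F \subset edgeset e) && ~~ gconnected (remove_edges e F)) #|F|.

(* graph distance: length of a shortest walk (walks of length < #|T|
   suffice in a connected graph) *)
Definition gdist (e : rel T) (x y : T) : nat :=
  \big[minn/#|T|]_(k < #|T| |
       [exists p : k.-tuple T, path e x p && (last x p == y)]) (k : nat).

Definition diameter (e : rel T) : nat := \max_(x : T) \max_(y : T) gdist e x y.

(* no (not necessarily induced) 4-cycle *)
Definition C4_free (e : rel T) : Prop :=
  forall a b c d : T, uniq [:: a; b; c; d] ->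
    ~ [&& e a b, e b c, e c d & e d a].

End Graphs.

(* Let d = gdist v w be the diameter and N_k the sphere of radius k around v.
   Every edge leaving the ball of radius k joins N_k to N_(k+1), so
   edge-connectivity at least 4 gives minimum degree at least 4 and at least 4
   edges between consecutive spheres.  In a C4-free graph two vertices have at
   most one common neighbour, hence sum_y C(deg_S y, 2) <= C(|S|, 2) for every
   vertex set S, and so sum_(y in U) deg_S y <= |U| + C(|S|, 2).  For
   S = N_(j+1) this forces |N_j| + |N_(j+1)| + |N_(j+2)| >= 9 when j + 2 <= d,
   and for S = N_1 it gives |N_2| >= 2 |N_1| >= 8.  Summing the spheres in
   blocks of three yields n >= 3 (d + 1). *)

From mathcomp Require Import all_boot all_order all_algebra.
From mathcomp Require Import zify lra.
Import Order.TTheory GRing.Theory Num.Theory.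
Set Implicit Arguments. Unset Strict Implicit. Unset Printing Implicit Defensive.

Section Distance.
Variables (T : finType) (e : rel T).

Lemma gdist_le_size x p : path e x p -> size p < #|T| -> gdist e x (last x p) <= size p.
Proof.
move=> e_p p_lt; have := @bigmin_le_cond _ nat 'I_#|T| #|T| (Ordinal p_lt)
  (fun k : 'I_#|T| => [exists q : k.-tuple T, path e x q && (last x q == last x p)])
  (fun k : 'I_#|T| => k : nat).
rewrite minEnat leEnat; apply; apply/existsP; exists (in_tuple p).
by rewrite e_p eqxx.
Qed.

Hypothesis e_conn : gconnected e.

Lemma short_walk x y : exists2 p, path e x p & last x p = y /\ size p < #|T|.
Proof.
case/andP: e_conn => _ /forallP/(_ x)/forallP/(_ y)/connectP[p e_p ->].
case: (shortenP e_p) => p' e_p' uniq_p' _; exists p' => //; split=> //.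
by rewrite -ltnS -[(size p').+1]/(size (x :: p')) -(card_uniqP uniq_p'); exact: max_card.
Qed.

Lemma gdist_lt_card x y : gdist e x y < #|T|.
Proof.
by have [p e_p [<- p_lt]] := short_walk x y; exact: leq_ltn_trans (gdist_le_size e_p p_lt) p_lt.
Qed.

Lemma gdist_le x p : path e x p -> gdist e x (last x p) <= size p.
Proof.
move=> e_p; case: (ltnP (size p) #|T|) => [|/(leq_trans (gdist_lt_card x _))/ltnW //].
exact: gdist_le_size.
Qed.

Lemma gdist_walk x y : exists2 p, path e x p & last x p = y /\ size p = gdist e x y.
Proof.
have [p e_p [p_y p_lt]] := short_walk x y.
have := @eq_bigmin _ nat 'I_#|T| #|T| (Ordinal p_lt)
  (fun k : 'I_#|T| => [exists q : k.-tuple T, path e x q && (last x q == y)])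
  (fun k : 'I_#|T| => k : nat).
rewrite minEnat -/(gdist e x y); case=> [||k /existsP[q /andP[e_q /eqP q_y]] ->].
- by apply/existsP; exists (in_tuple p); rewrite e_p p_y eqxx.
- by move=> k _; rewrite leEnat ltnW.
by exists q; rewrite ?size_tuple.
Qed.

Lemma gdist_refl x : gdist e x x = 0.
Proof. by apply/eqP; rewrite -leqn0; exact: (@gdist_le x [::]). Qed.

Lemma gdist_eq0 x y : (gdist e x y == 0) = (y == x).
Proof.
apply/eqP/eqP=> [|->]; last exact: gdist_refl.
by have [[|z p] _ [<- /= <-]] := gdist_walk x y.
Qed.

Lemma gdist_edge x y z : e y z -> gdist e x z <= (gdist e x y).+1.
Proof.
move=> e_yz; have [p e_p [p_y <-]] := gdist_walk x y.
have := @gdist_le x (rcons p z); rewrite last_rcons size_rcons rcons_path e_p p_y; exact.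
Qed.

Lemma gdist_pred x z : 0 < gdist e x z -> exists2 y, e y z & (gdist e x y).+1 = gdist e x z.
Proof.
have [p e_p [p_z p_size]] := gdist_walk x z.
case/lastP: p e_p p_z p_size => [_ _ <-//|p y].
rewrite rcons_path last_rcons size_rcons => /andP[e_p e_yz] <- p_size _.
exists (last x p) => //; apply/eqP; rewrite eqn_leq gdist_edge // -p_size ltnS.
by rewrite andbT gdist_le.
Qed.

End Distance.

Lemma sum_boolE (I : finType) (P : pred I) : \sum_i (P i : nat) = #|[set i | P i]|.
Proof. by rewrite -sum1dep_card [RHS]big_mkcond; apply: eq_bigr => i _; case: (P i). Qed.

Lemma sum_setU_disjoint (I : finType) (A B : {set I}) (F : I -> nat) :
  [disjoint A & B] -> \sum_(i in A :|: B) F i = \sum_(i in A) F i + \sum_(i in B) F i.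
Proof. by move=> AB; rewrite -bigU //; apply: eq_bigl => i; rewrite !inE. Qed.

Lemma cardsU_disjoint (I : finType) (A B : {set I}) :
  [disjoint A & B] -> #|A :|: B| = #|A| + #|B|.
Proof. by move=> AB; rewrite -!sum1_card sum_setU_disjoint. Qed.

Lemma leq_bin2_add1 n : n <= 'C(n, 2) + 1.
Proof. by case: n => // n; rewrite binS bin1 addn1 ltnS leq_addl. Qed.

Section Edges.
Variables (T : finType) (e : rel T).

Definition deg_in (B : {set T}) x := #|[set y in B | e x y]|.

Definition edges_between (A B : {set T}) : {set T * T} :=
  [set u | [&& u.1 \in A, u.2 \in B & e u.1 u.2]].

Lemma card_edges_between A B : #|edges_between A B| = \sum_(x in A) deg_in B x.
Proof.
under eq_bigr do rewrite /deg_in -sum1_card.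
by rewrite pair_big_dep -sum1_card; apply: eq_bigl => -[x y]; rewrite !inE.
Qed.

Hypothesis e_sym : symmetric e.

Lemma card_edges_betweenC A B : #|edges_between A B| = #|edges_between B A|.
Proof.
rewrite -[RHS](card_preimset _ (can_inj (@swap_pairK T T))).
by apply: eq_card => -[x y]; rewrite !inE /= e_sym andbCA.
Qed.

Lemma edge_connectivity_le_cut (X : {set T}) x0 x1 :
  x0 \in X -> x1 \notin X -> edge_connectivity e <= #|edges_between X (~: X)|.
Proof.
move=> x0X x1X; rewrite /edge_connectivity; case: ifP => // _.
set F := [set [set u.1; u.2] | u in edges_between X (~: X)].
have F_edges : F \subset edgeset e.
  apply/subsetP => _ /imsetP[[x y] + ->]; rewrite !inE /= => /and3P[_ _ e_xy].
  by apply/imset2P; exists x y; rewrite ?inE.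
have X_closed : closed (remove_edges e F) X.
  move=> x y /andP[e_xy xyF]; apply/idP/idP => [xX|yX]; apply: contraNT xyF => Xn.
    by apply/imsetP; exists (x, y); rewrite // !inE xX Xn e_xy.
  by apply/imsetP; exists (y, x); [rewrite !inE yX Xn e_sym | rewrite setUC].
have F_cuts : ~~ gconnected (remove_edges e F).
  apply/negP => /andP[_ /forallP/(_ x0)/forallP/(_ x1) /(closed_connect X_closed)].
  by rewrite x0X (negbTE x1X).
apply: leq_trans (leq_imset_card _ _); rewrite -minEnat.
have := @bigmin_le_cond _ nat _ #|T| F
  (fun F => (F \subset edgeset e) && ~~ gconnected (remove_edges e F)) (fun F => #|F|).
by rewrite leEnat F_edges F_cuts; apply.
Qed.

Lemma edge_connectivity_le_deg x : edge_connectivity e <= #|[set y | e x y]|.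
Proof.
have [T_le1|T_gt1] := leqP #|T| 1; first by rewrite /edge_connectivity T_le1.
have [x1 x1x] : exists x1, x1 != x.
  have [a [b [_ _ ab]]] := card_gt1P T_gt1.
  by case: (eqVneq a x) => [ax|]; [exists b; rewrite -ax eq_sym | exists a].
have x1_out : x1 \notin [set x] by rewrite inE.
apply: leq_trans (edge_connectivity_le_cut (set11 x) x1_out) _.
rewrite card_edges_between big_set1; apply/subset_leq_card/subsetP => y.
by rewrite !inE => /andP[].
Qed.

Lemma edge_connectivity_mul_card_le (S U : {set T}) :
  (forall x y, x \in S -> e x y -> y \in U) ->
  edge_connectivity e * #|S| <= \sum_(y in U) deg_in S y.
Proof.
move=> S_nbrs; rewrite -card_edges_between card_edges_betweenC card_edges_between.
rewrite mulnC -sum_nat_const; apply: leq_sum => x xS.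
apply: leq_trans (edge_connectivity_le_deg x) _; apply/subset_leq_card/subsetP => y.
by rewrite !inE => e_xy; rewrite e_xy (S_nbrs x y xS e_xy).
Qed.

Hypotheses (e_irr : irreflexive e) (e_C4 : C4_free e).

Lemma C4_free_common_nbrs a b : a != b -> #|[set y | e a y && e b y]| <= 1.
Proof.
have neq_edge u w : e u w -> u != w by apply: contraTneq => ->; rewrite e_irr.
move=> ab; apply/card_le1_eqP => y y'; rewrite !inE => /andP[a_y b_y] /andP[a_y' b_y'].
apply/eqP/negPn/negP => y'y; apply: (e_C4 (a := a) (b := y) (c := b) (d := y')).
  rewrite /= !inE !negb_or ab (eq_sym y y') y'y !neq_edge //.
  by rewrite e_sym.
by rewrite a_y e_sym b_y b_y' e_sym a_y'.
Qed.

Lemma sum_bin2_deg_in (S : {set T}) : \sum_y 'C(deg_in S y, 2) <= 'C(#|S|, 2).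
Proof.
have bin2E (B : {set T}) : 'C(#|B|, 2) = \sum_(A : {set T}) ((A \subset B) && (#|A| == 2)).
  by rewrite -cards_draws -sum_boolE.
rewrite bin2E; under eq_bigr do rewrite bin2E.
rewrite exchange_big leq_sum // => A _.
have [/cards2P[a [b [ab ->]]] | _] := boolP (#|A| == 2); last first.
  by rewrite big1 // => y _; rewrite andbF.
rewrite andbT; under eq_bigr do rewrite andbT.
have sub_nbrs y : [set a; b] \subset [set z in S | e y z] = [&& a \in S, b \in S, e a y & e b y].
  by rewrite subUset !sub1set !inE (e_sym y a) (e_sym y b) andbACA -andbA.
under eq_bigr do rewrite sub_nbrs.
have [abS | abNS] := boolP ([set a; b] \subset S); last first.
  rewrite big1 // => y _; apply/eqP; rewrite eqb0; apply: contra abNS => /and3P[aS bS _].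
  by rewrite subUset !sub1set aS bS.
rewrite sum_boolE; apply: leq_trans (C4_free_common_nbrs ab); apply/subset_leq_card/subsetP => y.
by rewrite !inE => /and4P[_ _ -> ->].
Qed.

Lemma sum_deg_in_le (S U : {set T}) : \sum_(y in U) deg_in S y <= #|U| + 'C(#|S|, 2).
Proof.
apply: leq_trans (_ : \sum_(y in U) ('C(deg_in S y, 2) + 1) <= _).
  by apply: leq_sum => y _; apply: leq_bin2_add1.
rewrite big_split /= sum1_card addnC leq_add2l.
apply: leq_trans (sum_bin2_deg_in S); rewrite [X in _ <= X](bigID (mem U)) /=.
exact: leq_addr.
Qed.

End Edges.

Section Spheres.
Variables (T : finType) (e : rel T) (v : T).

Definition sphere k : {set T} := [set y | gdist e v y == k].

Hypotheses (e_sym : symmetric e) (e_conn : gconnected e).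

Local Notation D := (gdist e v).

Lemma gdist_edge_sym y z : e y z -> D y <= (D z).+1.
Proof. by rewrite e_sym; apply: gdist_edge. Qed.

Lemma sphere_gt0 w k : k <= D w -> 0 < #|sphere k|.
Proof.
move Dw: (D w) => n; elim: n w Dw => [|n IHn] w Dw k_le; apply/card_gt0P.
  by exists w; rewrite inE Dw eq_sym -leqn0.
case: (eqVneq k n.+1) => [->|k_neq]; first by exists w; rewrite inE Dw.
have /(gdist_pred e_conn)[z _ Dz] : 0 < D w by rewrite Dw.
apply/card_gt0P/(IHn z); first by apply: succn_inj; rewrite Dz.
by rewrite -ltnS ltn_neqAle k_neq.
Qed.

Lemma edge_connectivity_le_sphere w j :
  j < D w -> edge_connectivity e <= #|edges_between e (sphere j) (sphere j.+1)|.
Proof.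
move=> j_lt; set X := [set y | D y <= j].
have vX : v \in X by rewrite inE gdist_refl.
have wX : w \notin X by rewrite inE -ltnNge.
apply: leq_trans (edge_connectivity_le_cut e_sym vX wX) _.
apply/subset_leq_card/subsetP => -[x y]; rewrite !inE /= -ltnNge => /and3P[Dx Dy e_xy].
have := gdist_edge e_conn v e_xy; rewrite e_xy andbT; lia.
Qed.

Hypothesis e_irr : irreflexive e.

Lemma sphere1E : sphere 1 = [set y | e v y].
Proof.
apply/setP => y; rewrite !inE; apply/eqP/idP => [Dy|e_vy].
  have /(gdist_pred e_conn)[x e_xy] : 0 < D y by rewrite Dy.
  by rewrite Dy => /succn_inj/eqP; rewrite gdist_eq0 // => /eqP <-.
have := gdist_edge e_conn v e_vy; rewrite gdist_refl // => Dy_le1.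
apply/eqP; rewrite eqn_leq Dy_le1 lt0n gdist_eq0 //.
by apply: contraTneq e_vy => ->; rewrite e_irr.
Qed.

Lemma sum_card_spheres d : (forall y, D y <= d) -> \sum_(k < d.+1) #|sphere k| = #|T|.
Proof.
move=> D_le; rewrite -sum1_card (partition_big (fun y => inord (D y) : 'I_d.+1) predT) //=.
apply: eq_bigr => k _; rewrite sum1dep_card; apply: eq_card => y; rewrite !inE.
by rewrite -val_eqE /= inordK // ltnS.
Qed.

Hypothesis e_C4 : C4_free e.

Lemma sphere_triple_card w j : 4 <= edge_connectivity e -> j.+1 < D w ->
  9 <= #|sphere j| + #|sphere j.+1| + #|sphere j.+2|.
Proof.
move=> lam4 j_lt; set S := sphere j.+1; set A := sphere j :|: sphere j.+2.
have disj_j : [disjoint sphere j & sphere j.+2] by apply/pred0P => y; rewrite /= !inE; lia.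
have disj_A : [disjoint A & S] by apply/pred0P => y; rewrite /= !inE; lia.
have cut_A : 8 <= \sum_(y in A) deg_in e S y.
  rewrite sum_setU_disjoint // -!card_edges_between (card_edges_betweenC e_sym (sphere j.+2)).
  apply: (@leq_add 4 4); apply: leq_trans lam4 _.
    exact: edge_connectivity_le_sphere (ltnW j_lt).
  exact: edge_connectivity_le_sphere j_lt.
have deg_S : 4 * #|S| <= \sum_(y in A :|: S) deg_in e S y.
  apply: leq_trans (edge_connectivity_mul_card_le e_sym _) => [|x y].
    by rewrite leq_mul2r lam4 orbT.
  rewrite !inE => /eqP Dx e_xy.
  by have := gdist_edge e_conn v e_xy; have := gdist_edge_sym e_xy; lia.
have C4_A := sum_deg_in_le e_sym e_irr e_C4 S A.
have C4_AS := sum_deg_in_le e_sym e_irr e_C4 S (A :|: S).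
have S_gt0 : 0 < #|S| by apply: (sphere_gt0 (w := w)); apply: ltnW.
have := sphere_gt0 (ltnW (ltnW j_lt)); have := sphere_gt0 j_lt.
rewrite !cardsU_disjoint // bin2 in C4_A C4_AS; nia.
Qed.

Lemma sphere2_card : (edge_connectivity e - 2) * #|sphere 1| <= #|sphere 2|.
Proof.
set S := sphere 1; set U := S :|: sphere 2.
have deg_v : deg_in e S v = #|S| by apply: eq_card => y; rewrite /S sphere1E !inE andbb.
have deg_le1 y : y != v -> deg_in e S y <= 1.
  move=> yv; have := sum_bin2_deg_in e_sym e_irr e_C4 S.
  rewrite (bigD1 v) //= deg_v (bigD1 y) //= => bin2_le.
  by rewrite leqNgt -(@bin_gt0 _ 2) lt0n negbK; apply/eqP; lia.
have vU : v \notin U by rewrite !inE gdist_refl.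
have deg_S : edge_connectivity e * #|S| <= \sum_(y in v |: U) deg_in e S y.
  apply: edge_connectivity_mul_card_le => // x y.
  rewrite !inE -(gdist_eq0 e_conn) => /eqP Dx e_xy.
  by have := gdist_edge e_conn v e_xy; lia.
have deg_U : \sum_(y in U) deg_in e S y <= #|U|.
  by rewrite -sum1_card; apply: leq_sum => y yU; apply: deg_le1; apply: contraNneq vU => <-.
have disj_S : [disjoint S & sphere 2] by apply/pred0P => y; rewrite /= !inE; lia.
rewrite big_setU1 //= deg_v in deg_S; rewrite cardsU_disjoint // in deg_U.
by rewrite mulnBl; lia.
Qed.

End Spheres.

Lemma leq_3mul_sum (a : nat -> nat) d : 2 <= d ->
  (forall k, k <= d -> 0 < a k) -> 4 <= a 1 -> 8 <= a 2 ->
  (forall j, j.+1 < d -> 9 <= a j + a j.+1 + a j.+2) ->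
  3 * d.+1 <= \sum_(k < d.+1) a k.
Proof.
case: d => [|[|d]] // _ a_gt0 a1 a2 a_triple; rewrite -(big_mkord xpredT a).
suff: forall n, n <= d -> 3 * n.+3 <= \sum_(0 <= k < n.+3) a k by apply.
elim/ltn_ind => -[|[|[|n]]] IH n_le.
- by rewrite !big_nat_recr //= big_geq //; lia.
- by rewrite !big_nat_recr //= big_geq //; have := a_gt0 3 (n_le : 3 <= d.+2); lia.
- rewrite !big_nat_recr //= big_geq //.
  by have := a_gt0 0 isT; have := a_gt0 3 (ltnW n_le); have := a_gt0 4 n_le; lia.
do 3 rewrite big_nat_recr //=.
by have := IH n ltac:(lia) ltac:(lia); have := a_triple n.+3 n_le; lia.
Qed.

Lemma gdist_le_diameter (T : finType) (e : rel T) x y : gdist e x y <= diameter e.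
Proof.
exact: leq_trans (leq_bigmax (F := gdist e x) y) (leq_bigmax (F := fun x => \max_y gdist e x y) x).
Qed.

Lemma diameter_attained (T : finType) (e : rel T) :
  0 < #|T| -> exists v w, gdist e v w = diameter e.
Proof.
move=> T_gt0; have [v v_max] := bigop.eq_bigmax (fun x => \max_y gdist e x y) T_gt0.
have [w w_max] := bigop.eq_bigmax (gdist e v) T_gt0.
by exists v, w; rewrite /diameter v_max w_max.
Qed.

Theorem theorem2 (T : finType) (e : rel T) :
  symmetric e -> irreflexive e -> gconnected e -> C4_free e ->
  4 <= edge_connectivity e ->
  ((diameter e)%:R <= ((#|T|)%:R - 3) / 3 :> rat)%R.
Proof.
move=> e_sym e_irr e_conn e_C4 lam4; case/andP: (e_conn) => T_gt0 _.
have [v [w vw_diam]] := diameter_attained e T_gt0; set d := diameter e in vw_diam *.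
have sphere_pos k : k <= d -> 0 < #|sphere e v k| by rewrite -vw_diam; apply: sphere_gt0.
have N1 : 4 <= #|sphere e v 1|.
  by rewrite sphere1E //; apply: leq_trans lam4 (edge_connectivity_le_deg e_sym v).
have N2 : 8 <= #|sphere e v 2| by have := sphere2_card v e_sym e_conn e_irr e_C4; nia.
have d_ge2 : 2 <= d.
  have /card_gt0P[y] : 0 < #|sphere e v 2| by apply: leq_trans N2.
  by rewrite inE => /eqP <-; apply: gdist_le_diameter.
have triple j : j.+1 < d -> 9 <= #|sphere e v j| + #|sphere e v j.+1| + #|sphere e v j.+2|.
  by rewrite -vw_diam; apply: sphere_triple_card.
have := leq_3mul_sum d_ge2 sphere_pos N1 N2 triple.
rewrite sum_card_spheres => [n_ge|y]; last exact: gdist_le_diameter.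
have : ((3 * d.+1)%:R <= (#|T|)%:R :> rat)%R by rewrite ler_nat.
by rewrite natrM -(natr1 d); lra.
Qed.
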